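(* Let $A=(a_1,\dots,a_p)$ and $B=(b_1,\dots,b_q)$ be finite lists of voids (notation in the context) ordered by nondecreasing start time, i.e. $S(a_1)\le S(a_2)\le\dots\le S(a_p)$ and $S(b_1)\le\dots\le S(b_q)$. Assume that at least one element of $A$ and at least one element of $B$ has finish time $+\infty$. Fix a real number $T_e$ and a required length $\ell>0$. Run the modified CEVF search: start with the pair $(a,b)=(a_1,b_1)$; while $L_{T_e}(a\cap b)<\ell$, replace $a=a_i$ by $a_{i+1}$ if $F(a)\le F(b)$, and otherwise replace $b=b_j$ by $b_{j+1}$; when $L_{T_e}(a\cap b)\ge \ell$, stop and output the pair $(a,b)$ (the ''scheduling void'' is $a\cap b$). Then: (i) the procedure never runs past the end of either list and terminates after inspecting at most $p+q-1$ pairs; (ii) the output pair $(a^*,b^* )$ is feasible, i.e. $L_{T_e}(a^*\cap b^* )\ge \ell$, and it is optimal: for every pair $(a_i,b_j)\in A\times B$ with $L_{T_e}(a_i\cap b_j)\ge\ell$ one has $S_{T_e}(a^*\cap b^* )\le S_{T_e}(a_i\cap b_j)$. In particular, in the network setting where $A=V^{Rx}$ is the set of all receiver voids (with $p\le MN+R$) and $B=V^G_x$ is the set of group voids of group $x$ (with $q\le N+1$), the algorithm finds the void with the earliest start time satisfying the length criterion in at most $N+MN+R$ steps, so its complexity is $O(MN)$ when $R,N\ll MN$.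
   Context: A void is a time interval $X$ with a start time $S(X)\in\mathbb{R}$ and a finish time $F(X)\in\mathbb{R}\cup\{+\infty\}$, $F(X)\ge S(X)$. For two voids $a,b$ and an earliest admissible time $T_e$, their (constrained) intersection $a\cap b$ has start $S_{T_e}(a\cap b)=\max(T_e,S(a),S(b))$, finish $F(a\cap b)=\min(F(a),F(b))$, and length $L_{T_e}(a\cap b)=F(a\cap b)-S_{T_e}(a\cap b)$ (which is $+\infty$ when both finish times are $+\infty$). A pair $(a,b)$ is feasible if $L_{T_e}(a\cap b)\ge \ell$, where $\ell=g/l+T_{grd}$ is the time needed to transmit the granted $g$ bytes at link rate $l$ plus a guard/tuning time $T_{grd}$. Network setting: an optical line terminal with $R$ receivers serves $M$ groups of $N$ optical network units each ($MN$ units in total). A receiver void is a maximal time interval in which no upstream transmission is scheduled on a given receiver; $V^{Rx}$ is the collection of receiver voids of all receivers, each receiver having one ''horizon'' void with finish time $+\infty$. A group void of group $x$ is a maximal interval during which no unit of group $x$ is scheduled to transmit; $V^G_x$ is their collection, including one horizon void with finish time $+\infty$. $T_e=t+rtt_{c,d}$ is the current time plus the round-trip time of the requesting unit. *)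

From Stdlib Require Import Reals List Lia.
Open Scope R_scope.

(* A void: start time S in R, finish time F in R ∪ {+oo}; None encodes +oo. *)
Record void := mkVoid { vS : R ; vF : option R }.

Definition void_wf (x : void) : Prop :=
  match vF x with None => True | Some f => vS x <= f end.

Definition Fle (f g : option R) : bool :=
  match f, g with
  | _, None => true
  | None, Some _ => false
  | Some a, Some b => if Rle_dec a b then true else false
  end.

Definition Fmin (f g : option R) : option R :=
  match f, g with
  | None, h => h
  | h, None => h
  | Some a, Some b => Some (Rmin a b)
  end.

Definition S_int (Te : R) (a b : void) : R := Rmax Te (Rmax (vS a) (vS b)).

Definition F_int (a b : void) : option R := Fmin (vF a) (vF b).

(* L_{Te}(a ∩ b) >= ell  (L = +oo when both finishes are +oo) *)
Definition feasible (Te ell : R) (a b : void) : Prop :=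
  match F_int a b with
  | None => True
  | Some f => ell <= f - S_int Te a b
  end.

Definition feasibleb (Te ell : R) (a b : void) : bool :=
  match F_int a b with
  | None => true
  | Some f => if Rle_dec ell (f - S_int Te a b) then true else false
  end.

Definition sorted_by_start (L : list void) : Prop :=
  forall k x y, nth_error L k = Some x -> nth_error L (S k) = Some y ->
    vS x <= vS y.

Definition has_infinite (L : list void) : Prop :=
  exists x, In x L /\ vF x = None.

(* Modified CEVF search. [cevf A B Te ell fuel i j] inspects at most [fuel]
   pairs, starting from the pair (a_i, b_j) (0-based indices). *)
Fixpoint cevf (A B : list void) (Te ell : R) (fuel i j : nat)
  : option (nat * nat) :=
  match fuel with
  | O => None
  | S n =>
    match nth_error A i, nth_error B j with
    | Some a, Some b =>
        if feasibleb Te ell a b then Some (i, j)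
        else if Fle (vF a) (vF b) then cevf A B Te ell n (S i) j
        else cevf A B Te ell n i (S j)
    | _, _ => None
    end
  end.

(* The search maintains the invariant that every pair (a_i', b_j') with
   i' < i or j' < j is infeasible.  When (a_i, b_j) is infeasible and
   F(a_i) <= F(b_j), then a_i is infeasible with every later b_j' too: the
   intersection cannot finish after F(a_i) = F(a_i ∩ b_j) but starts no
   earlier, since the lists are sorted by start time; symmetrically for b_j.
   The two voids of infinite finish form a feasible pair (I, J), so the
   indices never pass I and J and each step raises i + j; hence the search
   stops within I + J + 1 <= p + q - 1 steps.  By the invariant the stopping
   pair (i0, j0) has i0 <= i' and j0 <= j' for every feasible (a_i', b_j'),
   and monotonicity of the start max(Te, S a, S b) gives optimality. *)

From Stdlib Require Import Reals List Lia Lra.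
Open Scope R_scope.

Ltac destruct_Rle_dec := repeat match goal with
  | |- context [Rle_dec ?a ?b] => destruct (Rle_dec a b)
  | H : context [Rle_dec ?a ?b] |- _ => destruct (Rle_dec a b)
  end.

Lemma feasibleP Te ell a b : reflect (feasible Te ell a b) (feasibleb Te ell a b).
Proof.
  unfold feasibleb, feasible.
  destruct (F_int a b); destruct_Rle_dec; constructor; auto.
Qed.

Lemma feasible_infinite Te ell a b :
  vF a = None -> vF b = None -> feasible Te ell a b.
Proof. intros Ha Hb. unfold feasible, F_int. rewrite Ha, Hb. exact I. Qed.

Lemma S_int_le Te a a' b b' : vS a <= vS a' -> vS b <= vS b' ->
  S_int Te a b <= S_int Te a' b'.
Proof. intros. unfold S_int, Rmax. destruct_Rle_dec; lra. Qed.

Lemma not_feasible_later_r Te ell a b b' : vS b <= vS b' ->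
  ~ feasible Te ell a b -> Fle (vF a) (vF b) = true -> ~ feasible Te ell a b'.
Proof.
  intros Hs Hf Hle.
  pose proof (S_int_le Te a a b b' (Rle_refl _) Hs) as HS.
  unfold feasible, F_int, Fmin, Fle in *.
  destruct (vF a), (vF b), (vF b'); try discriminate; try (exfalso; apply Hf; exact I);
  unfold Rmin in *; destruct_Rle_dec; try discriminate; lra.
Qed.

Lemma not_feasible_later_l Te ell a a' b : vS a <= vS a' ->
  ~ feasible Te ell a b -> Fle (vF a) (vF b) = false -> ~ feasible Te ell a' b.
Proof.
  intros Hs Hf Hle.
  pose proof (S_int_le Te a a' b b Hs (Rle_refl _)) as HS.
  unfold feasible, F_int, Fmin, Fle in *.
  destruct (vF a), (vF b), (vF a'); try discriminate; try (exfalso; apply Hf; exact I);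
  unfold Rmin in *; destruct_Rle_dec; try discriminate; lra.
Qed.

Lemma sorted_by_start_le L k m x y : sorted_by_start L -> (k <= m)%nat ->
  nth_error L k = Some x -> nth_error L m = Some y -> vS x <= vS y.
Proof.
  intros Hs Hkm Hx. revert y. induction Hkm as [|m Hkm IH]; intros y Hy.
  - rewrite Hx in Hy. injection Hy as <-. lra.
  - destruct (nth_error L m) as [z|] eqn:Hz.
    + apply Rle_trans with (vS z); [apply IH; reflexivity | exact (Hs m z y Hz Hy)].
    + apply nth_error_None in Hz.
      assert (S m < length L)%nat by (apply nth_error_Some; congruence). lia.
Qed.

Lemma cevf_more_fuel A B Te ell n m i j r :
  cevf A B Te ell n i j = Some r -> (n <= m)%nat -> cevf A B Te ell m i j = Some r.
Proof.
  revert m i j. induction n as [|n IH]; intros m i j H Hm; [discriminate|].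
  destruct m as [|m]; [lia|]. simpl in *.
  destruct (nth_error A i), (nth_error B j); try discriminate.
  destruct (feasibleb Te ell v v0); auto.
  destruct (Fle (vF v) (vF v0)); apply IH; auto; lia.
Qed.

Section Search.

Variables (A B : list void) (Te ell : R).
Hypotheses (HsA : sorted_by_start A) (HsB : sorted_by_start B).

Definition pruned (i j : nat) : Prop :=
  forall i' j' a b, (i' < i \/ j' < j)%nat ->
    nth_error A i' = Some a -> nth_error B j' = Some b -> ~ feasible Te ell a b.

Lemma pruned_le i j i' j' a b : pruned i j ->
  nth_error A i' = Some a -> nth_error B j' = Some b -> feasible Te ell a b ->
  (i <= i' /\ j <= j')%nat.
Proof.
  intros Hp Ha Hb Hf.
  destruct (Nat.le_gt_cases i i'), (Nat.le_gt_cases j j'); auto;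
  exfalso; apply (Hp i' j' a b); auto.
Qed.

Lemma pruned_step_l i j a b : pruned i j ->
  nth_error A i = Some a -> nth_error B j = Some b -> ~ feasible Te ell a b ->
  Fle (vF a) (vF b) = true -> pruned (S i) j.
Proof.
  intros Hp Ha Hb Hf Hle i' j' a' b' Hij Ha' Hb'.
  destruct (Nat.lt_ge_cases i' i); [apply (Hp i' j'); auto|].
  destruct (Nat.lt_ge_cases j' j); [apply (Hp i' j'); auto|].
  replace i' with i in Ha' by lia. rewrite Ha in Ha'. injection Ha' as <-.
  apply (not_feasible_later_r Te ell a b); auto.
  apply (sorted_by_start_le B j j'); auto.
Qed.

Lemma pruned_step_r i j a b : pruned i j ->
  nth_error A i = Some a -> nth_error B j = Some b -> ~ feasible Te ell a b ->
  Fle (vF a) (vF b) = false -> pruned i (S j).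
Proof.
  intros Hp Ha Hb Hf Hle i' j' a' b' Hij Ha' Hb'.
  destruct (Nat.lt_ge_cases j' j); [apply (Hp i' j'); auto|].
  destruct (Nat.lt_ge_cases i' i); [apply (Hp i' j'); auto|].
  replace j' with j in Hb' by lia. rewrite Hb in Hb'. injection Hb' as <-.
  apply (not_feasible_later_l Te ell a a' b); auto.
  apply (sorted_by_start_le A i i'); auto.
Qed.

Lemma cevf_finds I J aI bJ :
  nth_error A I = Some aI -> nth_error B J = Some bJ -> feasible Te ell aI bJ ->
  forall n i j, pruned i j -> (I + J + 1 <= i + j + n)%nat ->
  exists i0 j0 a b, cevf A B Te ell n i j = Some (i0, j0) /\
    nth_error A i0 = Some a /\ nth_error B j0 = Some b /\
    feasible Te ell a b /\ pruned i0 j0.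
Proof.
  intros HI HJ HfIJ n. induction n as [|n IH]; intros i j Hp Hfuel;
    destruct (pruned_le i j I J aI bJ Hp HI HJ HfIJ) as [HiI HjJ]; [lia|].
  destruct (nth_error A i) as [a|] eqn:Ha.
  2:{ apply nth_error_None in Ha.
      assert (I < length A)%nat by (apply nth_error_Some; congruence). lia. }
  destruct (nth_error B j) as [b|] eqn:Hb.
  2:{ apply nth_error_None in Hb.
      assert (J < length B)%nat by (apply nth_error_Some; congruence). lia. }
  simpl. rewrite Ha, Hb.
  destruct (feasibleP Te ell a b) as [Hf|Hf].
  - exists i, j, a, b. auto.
  - destruct (Fle (vF a) (vF b)) eqn:Hle; apply IH; try lia.
    + exact (pruned_step_l i j a b Hp Ha Hb Hf Hle).
    + exact (pruned_step_r i j a b Hp Ha Hb Hf Hle).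
Qed.

Lemma pruned_optimal i0 j0 a b : pruned i0 j0 ->
  nth_error A i0 = Some a -> nth_error B j0 = Some b ->
  forall a' b', In a' A -> In b' B -> feasible Te ell a' b' ->
  S_int Te a b <= S_int Te a' b'.
Proof.
  intros Hp Ha Hb a' b' Ha' Hb' Hf.
  apply In_nth_error in Ha' as [i' Hi']. apply In_nth_error in Hb' as [j' Hj'].
  destruct (pruned_le i0 j0 i' j' a' b' Hp Hi' Hj' Hf).
  apply S_int_le; [apply (sorted_by_start_le A i0 i') | apply (sorted_by_start_le B j0 j')];
  auto.
Qed.

End Search.

Theorem theorem1 :
  forall (A B : list void) (Te ell : R),
    (forall x, In x A -> void_wf x) ->
    (forall x, In x B -> void_wf x) ->
    sorted_by_start A -> sorted_by_start B ->
    has_infinite A -> has_infinite B ->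
    0 < ell ->
    (* (i)+(ii): with at most p+q-1 inspected pairs, never running past the end
       of a list, the search stops at a feasible, optimal pair *)
    (exists i j a b,
        cevf A B Te ell (length A + length B - 1) 0 0 = Some (i, j) /\
        nth_error A i = Some a /\ nth_error B j = Some b /\
        feasible Te ell a b /\
        (forall a' b', In a' A -> In b' B -> feasible Te ell a' b' ->
           S_int Te a b <= S_int Te a' b'))
    /\
    (* network corollary: with p <= MN+R and q <= N+1, at most N+MN+R steps *)
    (forall M N R : nat,
        (length A <= M * N + R)%nat -> (length B <= N + 1)%nat ->
        (length A + length B - 1 <= N + M * N + R)%nat /\
        cevf A B Te ell (N + M * N + R) 0 0 =
        cevf A B Te ell (length A + length B - 1) 0 0).
Proof.
  intros A B Te ell _ _ HsA HsB [aI [HaIn HaI]] [bJ [HbIn HbJ]] _.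
  apply In_nth_error in HaIn as [I HI]. apply In_nth_error in HbIn as [J HJ].
  assert (I < length A)%nat by (apply nth_error_Some; congruence).
  assert (J < length B)%nat by (apply nth_error_Some; congruence).
  assert (Hp00 : pruned A B Te ell 0 0) by (intros i' j' a b Hij; lia).
  destruct (cevf_finds A B Te ell HsA HsB I J aI bJ HI HJ (feasible_infinite Te ell aI bJ HaI HbJ)
              (length A + length B - 1) 0 0 Hp00 ltac:(lia))
    as (i0 & j0 & a & b & Hc & Ha & Hb & Hf & Hp).
  split.
  - exists i0, j0, a, b.
    repeat split; auto. exact (pruned_optimal A B Te ell HsA HsB i0 j0 a b Hp Ha Hb).
  - intros M N R HA HB. split; [lia|].
    rewrite Hc. apply (cevf_more_fuel _ _ _ _ _ _ _ _ _ Hc). lia.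
Qed.
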